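(* There exist a financial system $S$ in the base model (all contracts of the same priority) and distinct banks $u,v_1,v_2$ with $e_{v_1},e_{v_2}\ge 1$ such that the following holds. For $(s_1,s_2)\in\{C,D\}^2$ let $S_{s_1s_2}$ be the system obtained from $S$ by, for each $i$ with $s_i=C$, decreasing $e_{v_i}$ by $1$ and increasing $e_u$ by $1$ (bank $v_i$ donates one unit to $u$). Then each $S_{s_1s_2}$ has exactly one solution, and the payoffs $(q_{v_1},q_{v_2})$ of $v_1,v_2$ at that solution, measured relative to the original external assets (i.e. the payoff of $v_i$ in $S_{s_1s_2}$ minus $e_{v_i}$ of $S$ plus the external assets $v_i$ still holds, equivalently its net gain from contracts minus the donated amount), are $(2,2)$ for $CC$, $(0,0)$ for $DD$, $(2,3)$ for $CD$, and $(3,2)$ for $DC$. In particular, in the two-player game where $v_i$ chooses $s_i$, the pure Nash equilibria are exactly $CD$ and $DC$.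
   Context: A financial system with payment priorities consists of: a finite set $V$ of banks; external assets $e_v\ge 0$ for each $v\in V$; a number $P\ge 1$ of priority levels; and a finite set of contracts, each of which is either a debt contract from a debtor $u$ to a creditor $v\neq u$ with weight $c>0$, or a credit default swap (CDS) from a debtor $u$ to a creditor $v\neq u$ in reference to a bank $w\notin\{u,v\}$ (the reference entity) with weight $c>0$. Every contract has a priority in $\{1,\dots,P\}$ (1 is the highest priority). It is assumed that every bank that is the reference entity of some CDS is the debtor of at least one debt contract of positive weight. Given a recovery rate vector $r\in[0,1]^V$: the liability of a contract $k$ is $l_k(r)=c$ if $k$ is a debt of weight $c$, and $l_k(r)=c\,(1-r_w)$ if $k$ is a CDS of weight $c$ in reference to $w$. For a bank $v$, $l_v(r)$ is the sum of the liabilities of the contracts with debtor $v$; $l_v^{(\rho)}(r)$ is the sum of the liabilities of contracts with debtor $v$ and priority $\rho$; and $l_v^{(\le\rho)}(r)=\sum_{i=1}^{\rho}l_v^{(i)}(r)$ (with $l_v^{(\le 0)}=0$). The payment on a contract $k$ with debtor $v$ and priority $\rho$ is $p_k(r)=l_k(r)\cdot\min\{1,\max\{0,(r_v l_v(r)-l_v^{(\le\rho-1)}(r))/l_v^{(\rho)}(r)\}\}$ (and $p_k(r)=0$ if $l_v^{(\rho)}(r)=0$). The assets of $v$ are $a_v(r)=e_v+\sum_k p_k(r)$, summing over contracts $k$ with creditor $v$. A vector $r\in[0,1]^V$ is a solution (clearing vector) if for every $v\in V$: $r_v=1$ when $a_v(r)\ge l_v(r)$, and $r_v=a_v(r)/l_v(r)$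 when $a_v(r)<l_v(r)$. The payoff of $v$ is $q_v(r)=\max\{a_v(r)-l_v(r),0\}$. When $P=1$, payments reduce to $p_k(r)=r_v\,l_k(r)$ (principle of proportionality); this is called the base model. In this statement the acting banks $v_1,v_2$ have no outgoing contracts, and the game payoff of $v_i$ in $S_{s_1s_2}$ is defined as $q_{v_i}$ computed in $S_{s_1s_2}$ minus the external assets $e_{v_i}$ that $v_i$ had in $S$ plus... more simply: the total incoming payments of $v_i$ at the solution of $S_{s_1s_2}$ minus the amount ($0$ or $1$) that $v_i$ donated. *)

From Stdlib Require Import Reals Lra List Arith.
Import ListNotations.
Open Scope R_scope.

(* Banks are the natural numbers 0 .. nb-1.  A contract in the base model
   (a single priority level, so no priority field is needed). *)
Inductive contract : Type :=
| Debt (u v : nat) (c : R)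
| CDS  (u v w : nat) (c : R).       (* CDS from u to v in reference to w, weight c *)

Definition debtor (k : contract) : nat :=
  match k with Debt u _ _ => u | CDS u _ _ _ => u end.
Definition creditor (k : contract) : nat :=
  match k with Debt _ v _ => v | CDS _ v _ _ => v end.
Definition weight (k : contract) : R :=
  match k with Debt _ _ c => c | CDS _ _ _ c => c end.

Record system : Type := Build_system {
  nb : nat;
  ext : nat -> R;
  cons : list contract }.

Definition well_formed (S : system) : Prop :=
  (forall v, (v < nb S)%nat -> 0 <= ext S v) /\
  (forall k, In k (cons S) ->
     (debtor k < nb S)%nat /\ (creditor k < nb S)%nat /\
     debtor k <> creditor k /\ 0 < weight k /\
     match k with
     | Debt _ _ _ => True
     | CDS u v w _ =>
         (w < nb S)%nat /\ w <> u /\ w <> v /\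
         exists v' c', In (Debt w v' c') (cons S) /\ 0 < c'
     end).

Definition liab (r : nat -> R) (k : contract) : R :=
  match k with
  | Debt _ _ c => c
  | CDS _ _ w c => c * (1 - r w)
  end.

Definition lv (S : system) (r : nat -> R) (v : nat) : R :=
  fold_right (fun k acc => (if Nat.eqb (debtor k) v then liab r k else 0) + acc)
             0 (cons S).

(* payment on contract k in the base model (principle of proportionality) *)
Definition payment (r : nat -> R) (k : contract) : R :=
  r (debtor k) * liab r k.

Definition assets (S : system) (r : nat -> R) (v : nat) : R :=
  ext S v +
  fold_right (fun k acc => (if Nat.eqb (creditor k) v then payment r k else 0) + acc)
             0 (cons S).

Definition is_solution (S : system) (r : nat -> R) : Prop :=
  forall v, (v < nb S)%nat ->
    0 <= r v <= 1 /\
    (lv S r v <= assets S r v -> r v = 1) /\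
    (assets S r v < lv S r v -> r v = assets S r v / lv S r v).

Definition unique_solution (S : system) (r : nat -> R) : Prop :=
  is_solution S r /\
  forall r', is_solution S r' -> forall v, (v < nb S)%nat -> r' v = r v.

Definition payoff (S : system) (r : nat -> R) (v : nat) : R :=
  Rmax (assets S r v - lv S r v) 0.

Definition no_outgoing (S : system) (v : nat) : Prop :=
  forall k, In k (cons S) -> debtor k <> v.

Inductive strat : Type := SC | SD.

Definition don (s : strat) : R := match s with SC => 1 | SD => 0 end.

Definition ind (x y : nat) : R := if Nat.eqb x y then 1 else 0.

Definition donate (S : system) (u v1 v2 : nat) (s1 s2 : strat) : system :=
  Build_system (nb S)
    (fun x => ext S x - don s1 * ind x v1 - don s2 * ind x v2
              + (don s1 + don s2) * ind x u)
    (cons S).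

Definition nash (pay : strat -> strat -> R * R) (s1 s2 : strat) : Prop :=
  (forall t, fst (pay t s2) <= fst (pay s1 s2)) /\
  (forall t, snd (pay s1 t) <= snd (pay s1 s2)).

(* Bank u = 0 owes 1 to bank 3, which owes 1 to bank 5; bank 5 has sold bank 4
   (owing 1 to 5) a CDS on 3, and bank 6 has sold v1 = 1 and v2 = 2 CDSs of
   weight 3 on 4.  If nobody donates, u and hence 3 default completely, so the
   CDS pays 4, which then repays in full and the CDSs on 4 are worthless.  A
   single donated unit lets u and then 3 pay in full; the CDS on 3 becomes
   worthless, 4 defaults completely, and each v_i receives 3.  So the
   recovery rates are r_0 = r_3 = min(g, 1) and r_4 = 1 - min(g, 1) for a gift
   g to u, and each v_i gains 3 min(g, 1) minus its own donation: the game of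
   chicken, whose pure equilibria are the two asymmetric profiles. *)
From Pilot Require Import Defs.
From Stdlib Require Import Reals List Lra Lia.
Import ListNotations.
Open Scope R_scope.

Definition recovery (a l : R) : R := if Rle_dec l a then 1 else a / l.

Lemma recovery_full (a l : R) : l <= a -> recovery a l = 1.
Proof. intros Hla; unfold recovery; destruct Rle_dec; [reflexivity | contradiction]. Qed.

Lemma recovery_unit (a : R) : 0 <= a -> recovery a 1 = Rmin a 1.
Proof.
  intros Ha; unfold recovery; destruct Rle_dec as [H1 | H1].
  - now rewrite Rmin_right.
  - rewrite Rmin_left by lra; field.
Qed.

Lemma solution_recovery (S : system) (r : nat -> R) (v : nat) :
  is_solution S r -> (v < nb S)%nat -> r v = recovery (assets S r v) (lv S r v).
Proof.
  intros Hr Hv; destruct (Hr v Hv) as [_ [Hfull Hpart]].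
  unfold recovery; destruct Rle_dec as [H | H]; [now apply Hfull | apply Hpart; lra].
Qed.

Lemma recovery_solution (S : system) (r : nat -> R) :
  (forall v, (v < nb S)%nat ->
     0 <= r v <= 1 /\ r v = recovery (assets S r v) (lv S r v)) ->
  is_solution S r.
Proof.
  intros H v Hv; destruct (H v Hv) as [Hb Hr].
  unfold recovery in Hr; destruct Rle_dec; repeat split; intros; auto; lra.
Qed.

Definition contracts : list contract :=
  [Debt 0 3 1; Debt 3 5 1; CDS 5 4 3 1; Debt 4 5 1; CDS 6 1 4 3; CDS 6 2 4 3].

Definition S0 : system :=
  Build_system 7
    (fun i => match i with 1%nat | 2%nat | 5%nat => 1 | 6%nat => 6 | _ => 0 end)
    contracts.

Lemma S0_well_formed : well_formed S0.
Proof.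
  split.
  - intros v Hv; simpl in Hv.
    do 7 (destruct v as [|v]; [simpl; lra|]); lia.
  - intros k Hk; simpl in Hk.
    repeat destruct Hk as [<- | Hk]; try contradiction; simpl;
      repeat split; try lia; try lra;
      (exists 5%nat, 1; split; [simpl; tauto | lra]).
Qed.

Lemma no_outgoing_S0 (v : nat) : (v = 1 \/ v = 2)%nat -> no_outgoing S0 v.
Proof.
  intros Hv k Hk; simpl in Hk.
  repeat destruct Hk as [<- | Hk]; try contradiction; simpl; lia.
Qed.

Section Clearing.

Variables (T : system) (g : R).
Hypotheses (nb_T : nb T = 7%nat) (cons_T : Defs.cons T = contracts) (g_ge0 : 0 <= g)
  (ext0 : ext T 0 = g) (ext1 : 0 <= ext T 1) (ext2 : 0 <= ext T 2)
  (ext3 : ext T 3 = 0) (ext4 : ext T 4 = 0) (ext5 : ext T 5 = 1) (ext6 : ext T 6 = 6).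

Definition clearing (i : nat) : R :=
  match i with
  | 0%nat | 3%nat => Rmin g 1
  | 4%nat => 1 - Rmin g 1
  | _ => 1
  end.

Lemma liabilities_T (r : nat -> R) :
  lv T r 0 = 1 /\ lv T r 1 = 0 /\ lv T r 2 = 0 /\ lv T r 3 = 1 /\
  lv T r 4 = 1 /\ lv T r 5 = 1 - r 3%nat /\ lv T r 6 = 6 * (1 - r 4%nat).
Proof. unfold lv, liab; rewrite cons_T; simpl; repeat split; ring. Qed.

Lemma assets_T (r : nat -> R) :
  assets T r 0 = g /\ assets T r 1 = ext T 1 + 3 * r 6%nat * (1 - r 4%nat) /\
  assets T r 2 = ext T 2 + 3 * r 6%nat * (1 - r 4%nat) /\ assets T r 3 = r 0%nat /\
  assets T r 4 = r 5%nat * (1 - r 3%nat) /\ assets T r 5 = 1 + r 3%nat + r 4%nat /\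
  assets T r 6 = 6.
Proof.
  unfold assets, payment, liab; rewrite cons_T; simpl.
  rewrite ext0, ext3, ext4, ext5, ext6; repeat split; ring.
Qed.

Lemma clearing_solution : is_solution T clearing.
Proof.
  assert (Hm : 0 <= Rmin g 1 <= 1) by (split; [apply Rmin_glb | apply Rmin_r]; lra).
  destruct (liabilities_T clearing) as (l0 & l1 & l2 & l3 & l4 & l5 & l6).
  destruct (assets_T clearing) as (a0 & a1 & a2 & a3 & a4 & a5 & a6).
  apply recovery_solution; rewrite nb_T; intros v Hv.
  destruct v as [|[|[|[|[|[|[|v]]]]]]]; [.. | lia]; simpl in *; split; try lra.
  - now rewrite a0, l0, recovery_unit.
  - rewrite a1, l1, recovery_full; nra.
  - rewrite a2, l2, recovery_full; nra.
  - rewrite a3, l3, recovery_unit, (Rmin_left (Rmin g 1)); lra.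
  - rewrite a4, l4, recovery_unit, (Rmin_left (1 * _)); lra.
  - rewrite a5, l5, recovery_full; lra.
  - rewrite a6, l6, recovery_full; lra.
Qed.

Lemma clearing_unique (r : nat -> R) :
  is_solution T r -> forall v, (v < 7)%nat -> r v = clearing v.
Proof.
  intros Hr.
  assert (Hb : forall i, (i < 7)%nat -> 0 <= r i <= 1)
    by (intros i Hi; apply (Hr i); rewrite nb_T; lia).
  assert (Hrec : forall i, (i < 7)%nat -> r i = recovery (assets T r i) (lv T r i))
    by (intros i Hi; apply solution_recovery; [exact Hr | rewrite nb_T; lia]).
  destruct (liabilities_T r) as (l0 & l1 & l2 & l3 & l4 & l5 & l6).
  destruct (assets_T r) as (a0 & a1 & a2 & a3 & a4 & a5 & a6).
  pose proof (Hb 0%nat ltac:(lia)); pose proof (Hb 3%nat ltac:(lia));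
    pose proof (Hb 4%nat ltac:(lia)).
  assert (r5 : r 5%nat = 1)
    by (rewrite Hrec, a5, l5 by lia; apply recovery_full; lra).
  assert (r6 : r 6%nat = 1)
    by (rewrite Hrec, a6, l6 by lia; apply recovery_full; lra).
  assert (r0 : r 0%nat = Rmin g 1)
    by (rewrite Hrec, a0, l0 by lia; now apply recovery_unit).
  assert (r3 : r 3%nat = r 0%nat)
    by (rewrite Hrec, a3, l3, recovery_unit by (lia || lra); apply Rmin_left; lra).
  assert (r4 : r 4%nat = 1 - r 3%nat)
    by (rewrite Hrec, a4, l4, r5, Rmult_1_l, recovery_unit by (lia || lra);
        apply Rmin_left; lra).
  assert (r1 : r 1%nat = 1)
    by (rewrite Hrec, a1, l1 by lia; apply recovery_full; nra).
  assert (r2 : r 2%nat = 1)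
    by (rewrite Hrec, a2, l2 by lia; apply recovery_full; nra).
  intros v Hv; destruct v as [|[|[|[|[|[|[|v]]]]]]]; simpl; try lia; congruence.
Qed.

Lemma payoff_clearing (i : nat) :
  (i = 1 \/ i = 2)%nat -> payoff T clearing i = ext T i + 3 * Rmin g 1.
Proof.
  assert (Hm : 0 <= Rmin g 1) by (apply Rmin_glb; lra).
  destruct (liabilities_T clearing) as (_ & l1 & l2 & _).
  destruct (assets_T clearing) as (_ & a1 & a2 & _).
  unfold payoff; intros [-> | ->]; simpl in *;
    [rewrite a1, l1 | rewrite a2, l2]; rewrite Rmax_left; nra.
Qed.

End Clearing.

Lemma don_bounds (s : strat) : 0 <= don s <= 1.
Proof. destruct s; simpl; lra. Qed.

Lemma donate_S0_unique (s1 s2 : strat) :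
  unique_solution (donate S0 0 1 2 s1 s2) (clearing (don s1 + don s2)).
Proof.
  pose proof (don_bounds s1); pose proof (don_bounds s2).
  split; [eapply clearing_solution | intros r Hr v Hv; eapply clearing_unique];
    try eassumption; try reflexivity; unfold donate, Defs.ind; simpl; lra.
Qed.

Lemma donate_S0_gain (s1 s2 : strat) (i : nat) (s : strat) :
  ((i = 1 /\ s = s1) \/ (i = 2 /\ s = s2))%nat ->
  payoff (donate S0 0 1 2 s1 s2) (clearing (don s1 + don s2)) i - ext S0 i =
  3 * Rmin (don s1 + don s2) 1 - don s.
Proof.
  pose proof (don_bounds s1); pose proof (don_bounds s2).
  intros [[-> ->] | [-> ->]]; rewrite payoff_clearing;
    try reflexivity; unfold donate, Defs.ind; simpl; lra || lia.
Qed.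

Lemma chicken_nash (pay : strat -> strat -> R * R) :
  pay SC SC = (2, 2) -> pay SD SD = (0, 0) -> pay SC SD = (2, 3) -> pay SD SC = (3, 2) ->
  forall s1 s2, nash pay s1 s2 <-> (s1 = SC /\ s2 = SD) \/ (s1 = SD /\ s2 = SC).
Proof.
  intros Hcc Hdd Hcd Hdc s1 s2; unfold nash.
  destruct s1, s2; split.
  all: try (intros [[? ?] | [? ?]]; discriminate).
  all: try (intros _; split; intros []; rewrite ?Hcc, ?Hdd, ?Hcd, ?Hdc; simpl; lra).
  all: try (intros _; now auto).
  - intros [Hdev _]; specialize (Hdev SD); rewrite Hcc, Hdc in Hdev; simpl in Hdev; lra.
  - intros [Hdev _]; specialize (Hdev SC); rewrite Hdd, Hcd in Hdev; simpl in Hdev; lra.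
Qed.

Definition donation_game (s1 s2 : strat) : R * R :=
  (3 * Rmin (don s1 + don s2) 1 - don s1, 3 * Rmin (don s1 + don s2) 1 - don s2).

Lemma donation_game_values :
  donation_game SC SC = (2, 2) /\ donation_game SD SD = (0, 0) /\
  donation_game SC SD = (2, 3) /\ donation_game SD SC = (3, 2).
Proof.
  unfold donation_game, Rmin; simpl.
  repeat split; f_equal; destruct Rle_dec; lra.
Qed.

Theorem mainTheorem12 :
  exists (S : system) (u v1 v2 : nat),
    well_formed S /\
    (u < nb S)%nat /\ (v1 < nb S)%nat /\ (v2 < nb S)%nat /\
    u <> v1 /\ u <> v2 /\ v1 <> v2 /\
    1 <= ext S v1 /\ 1 <= ext S v2 /\
    no_outgoing S v1 /\ no_outgoing S v2 /\
    exists pay : strat -> strat -> R * R,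
      (forall s1 s2, exists r,
          unique_solution (donate S u v1 v2 s1 s2) r /\
          pay s1 s2 =
            (payoff (donate S u v1 v2 s1 s2) r v1 - ext S v1,
             payoff (donate S u v1 v2 s1 s2) r v2 - ext S v2)) /\
      pay SC SC = (2, 2) /\ pay SD SD = (0, 0) /\
      pay SC SD = (2, 3) /\ pay SD SC = (3, 2) /\
      (forall s1 s2, nash pay s1 s2 <-> (s1 = SC /\ s2 = SD) \/ (s1 = SD /\ s2 = SC)).
Proof.
  exists S0, 0%nat, 1%nat, 2%nat.
  split; [exact S0_well_formed |].
  do 6 (split; [simpl; lia |]).
  do 2 (split; [simpl; lra |]).
  split; [apply no_outgoing_S0; auto |].
  split; [apply no_outgoing_S0; auto |].
  exists donation_game.
  destruct donation_game_values as (Hcc & Hdd & Hcd & Hdc).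
  split; [| repeat split; auto; now apply chicken_nash].
  intros s1 s2; exists (clearing (don s1 + don s2)).
  split; [apply donate_S0_unique |].
  now rewrite (donate_S0_gain s1 s2 1 s1), (donate_S0_gain s1 s2 2 s2) by auto.
Qed.
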